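(* Let $k\in\mathbb{Z}$, let $n\ge 0$ be an integer, and let $m$ be an odd positive integer. Then $$G_{n}^{(k)}(x)=\sum_{l=0}^{n}\binom{n}{l}m^{l-1}\sum_{j=1}^{n-l+1}\sum_{s=0}^{m-1}(-1)^{s}G_{l}\Big(\frac{s+x}{m}\Big)\frac{1}{j^{k-1}}\frac{S_{1}(n-l+1,j)}{n-l+1}.$$
   Context: The Genocchi polynomials $G_n(x)$ are defined by $\frac{2t}{e^t+1}e^{xt}=\sum_{n=0}^{\infty}G_n(x)\frac{t^n}{n!}$. For $k\in\mathbb{Z}$, $\mathrm{Ei}_k(x)=\sum_{n=1}^{\infty}\frac{x^n}{n^k(n-1)!}$, and the poly-Genocchi polynomials $G_n^{(k)}(x)$ are defined by $\frac{2\,\mathrm{Ei}_k(\log(1+t))}{e^t+1}e^{xt}=\sum_{n=0}^{\infty}G_n^{(k)}(x)\frac{t^n}{n!}$. $S_1(n,m)$ are the signed Stirling numbers of the first kind: $\frac{(\log(1+t))^m}{m!}=\sum_{n=m}^{\infty}S_1(n,m)\frac{t^n}{n!}$. *)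

(* Formal power series over a numFieldType R (characteristic 0),
   represented by their coefficient sequences nat -> R. *)
From mathcomp Require Import all_boot all_order all_algebra.
Set Implicit Arguments. Unset Strict Implicit. Unset Printing Implicit Defensive.
Import Order.TTheory GRing.Theory Num.Theory.
Local Open Scope ring_scope.

Section FPS.
Variable R : numFieldType.

Definition fps := nat -> R.

Definition fps_one : fps := fun n => (n == 0%N)%:R.
Definition fps_X : fps := fun n => (n == 1%N)%:R.
Definition fps_add (f g : fps) : fps := fun n => f n + g n.
Definition fps_scale (c : R) (f : fps) : fps := fun n => c * f n.
Definition fps_mul (f g : fps) : fps :=
  fun n => \sum_(i < n.+1) f i * g (n - i)%N.
Definition fps_pow (f : fps) (j : nat) : fps := iter j (fps_mul f) fps_one.

(* multiplicative inverse in R[[t]] (for f 0 <> 0):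
   b_0 = (f 0)^-1,  b_n = - (f 0)^-1 * sum_{i=1}^n f_i b_{n-i}.
   inv_upto f n = [:: b_0; ...; b_n]. *)
Fixpoint inv_upto (f : fps) (n : nat) : seq R :=
  match n with
  | 0%N => [:: (f 0%N)^-1]
  | n'.+1 =>
      let s := inv_upto f n' in
      rcons s (- (f 0%N)^-1 * \sum_(1 <= i < n'.+2) f i * nth 0 s (n'.+1 - i)%N)
  end.
Definition fps_inv (f : fps) : fps := fun n => nth 0 (inv_upto f n) n.

(* composition f(g(t)), for g 0 = 0 *)
Definition fps_comp (f g : fps) : fps :=
  fun n => \sum_(j < n.+1) f j * fps_pow g j n.

Definition fps_exp (c : R) : fps := fun n => c ^+ n / (n`!)%:R.
Definition fps_log1p : fps :=
  fun n => if n is 0%N then 0 else (-1) ^+ n.+1 / n%:R.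
Definition fps_Ei (k : int) : fps :=
  fun n => if n is 0%N then 0 else ((n%:R : R) ^ k * (n.-1)`!%:R)^-1.

Definition fps_inv_exp1 : fps := fps_inv (fps_add (fps_exp 1) fps_one).

(* Genocchi polynomials: 2t/(e^t+1) e^{xt} = sum G_n(x) t^n/n! *)
Definition genocchi (n : nat) (x : R) : R :=
  (n`!)%:R * fps_mul (fps_mul (fps_scale 2 fps_X) fps_inv_exp1) (fps_exp x) n.

(* poly-Genocchi polynomials:
   2 Ei_k(log(1+t))/(e^t+1) e^{xt} = sum G_n^{(k)}(x) t^n/n! *)
Definition poly_genocchi (k : int) (n : nat) (x : R) : R :=
  (n`!)%:R *
  fps_mul (fps_mul (fps_scale 2 (fps_comp (fps_Ei k) fps_log1p)) fps_inv_exp1)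
          (fps_exp x) n.

(* signed Stirling numbers of the first kind:
   (log(1+t))^m / m! = sum_{n>=m} S1(n,m) t^n/n! *)
Definition stirling1 (n m : nat) : R :=
  (n`!)%:R / (m`!)%:R * fps_pow fps_log1p m n.

End FPS.

(* The alternating sum T(t) = sum_{s<m} (-1)^s e^{st} telescopes against e^t + 1:
   for odd m, T(t) (e^t + 1) = e^{mt} + 1.  Hence
   e^{xt}/(e^t+1) = sum_{s<m} (-1)^s e^{(s+x)t}/(e^{mt}+1), and rescaling t by m
   gives the multiplication formula
   G_l(x) = m^{l-1} sum_{s<m} (-1)^s G_l((s+x)/m).
   Since Ei_k(log(1+t)) has no constant term, the generating function of the
   poly-Genocchi polynomials is 2t e^{xt}/(e^t+1) times Ei_k(log(1+t))/t, whose
   coefficients are the Stirling sums; the binomial convolution of exponential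
   generating functions then yields the formula. *)
From mathcomp Require Import all_boot all_order all_algebra ring.
From Stdlib Require Import FunctionalExtensionality.
Set Implicit Arguments. Unset Strict Implicit. Unset Printing Implicit Defensive.
Import Order.TTheory GRing.Theory Num.Theory.
Local Open Scope ring_scope.

Section FpsAlgebra.
Variable R : numFieldType.
Implicit Types (f g h : fps R) (a c : R).

(* The coefficients up to n of a product only depend on the truncations at n,
   so fps_mul inherits the ring laws of {poly R}. *)
Definition fps_trunc f n : {poly R} := \poly_(i < n.+1) f i.

Lemma coef_fps_trunc f n i : (i <= n)%N -> (fps_trunc f n)`_i = f i.
Proof. by move=> le_in; rewrite coef_poly ltnS le_in. Qed.

Lemma fps_mulE f g n (p q : {poly R}) :
    (forall i, (i <= n)%N -> p`_i = f i) ->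
    (forall i, (i <= n)%N -> q`_i = g i) ->
  fps_mul f g n = (p * q)`_n.
Proof.
move=> pE qE; rewrite coefM; apply: eq_bigr => i _.
by rewrite pE ?qE ?leq_subr // -ltnS.
Qed.

Lemma fps_mul_trunc f g n : fps_mul f g n = (fps_trunc f n * fps_trunc g n)`_n.
Proof. by apply: fps_mulE => i; apply: coef_fps_trunc. Qed.

Lemma fps_mulC f g : fps_mul f g = fps_mul g f.
Proof. by apply: functional_extensionality => n; rewrite !fps_mul_trunc mulrC. Qed.

Lemma fps_mulA f g h : fps_mul (fps_mul f g) h = fps_mul f (fps_mul g h).
Proof.
apply: functional_extensionality => n.
have truncM p q i : (i <= n)%N ->
    (fps_trunc p n * fps_trunc q n)`_i = fps_mul p q i.
  move=> le_in; symmetry; apply: fps_mulE => j le_ji;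
  by apply: coef_fps_trunc; apply: leq_trans le_in.
rewrite (@fps_mulE _ _ n (fps_trunc f n * fps_trunc g n) (fps_trunc h n)).
- by rewrite -mulrA; symmetry; apply: fps_mulE => i; [apply: coef_fps_trunc|apply: truncM].
- by move=> i; apply: truncM.
- by move=> i; apply: coef_fps_trunc.
Qed.

Lemma fps_mulDl f g h : fps_mul (fps_add f g) h = fps_add (fps_mul f h) (fps_mul g h).
Proof.
apply: functional_extensionality => n.
by rewrite /fps_mul /fps_add -big_split; apply: eq_bigr => i _; rewrite mulrDl.
Qed.

Lemma fps_mulZl c f g : fps_mul (fps_scale c f) g = fps_scale c (fps_mul f g).
Proof.
apply: functional_extensionality => n.
by rewrite /fps_mul /fps_scale mulr_sumr; apply: eq_bigr => i _; rewrite mulrA.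
Qed.

Lemma fps_mul_suml (I : finType) (F : I -> fps R) g :
  fps_mul (fun n => \sum_(s : I) F s n) g = fun n => \sum_(s : I) fps_mul (F s) g n.
Proof.
apply: functional_extensionality => n.
by rewrite /fps_mul; under eq_bigr do rewrite mulr_suml; rewrite exchange_big.
Qed.

Lemma fps_mul1l f : fps_mul (fps_one R) f = f.
Proof.
apply: functional_extensionality => n.
rewrite /fps_mul big_ord_recl /fps_one mul1r subn0 big1 ?addr0 // => i _.
by rewrite mul0r.
Qed.

Lemma fps_mulXl f n : fps_mul (fps_X R) f n = if n is n'.+1 then f n' else 0.
Proof.
rewrite /fps_mul /fps_X; case: n => [|n]; first by rewrite big_ord1 mul0r.
rewrite big_ord_recl mul0r add0r big_ord_recl mul1r subSS subn0 big1 ?addr0 //.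
by move=> i _; rewrite mul0r.
Qed.

Lemma fps_mul_inv_unique f g h :
  fps_mul f g = fps_one R -> fps_mul f h = fps_one R -> g = h.
Proof.
move=> fg fh; rewrite -[g]fps_mul1l -fh [fps_mul f h]fps_mulC fps_mulA fg.
by rewrite fps_mulC fps_mul1l.
Qed.

Lemma fps_mul_egf f g n :
  n`!%:R * fps_mul f g n =
  \sum_(l < n.+1) 'C(n, l)%:R * (l`!%:R * f l) * ((n - l)`!%:R * g (n - l)%N).
Proof.
rewrite /fps_mul mulr_sumr; apply: eq_bigr => l _.
have le_ln : (l <= n)%N by rewrite -ltnS.
by rewrite -(bin_fact le_ln) !natrM; ring.
Qed.

Lemma fps_exp_add a c : fps_mul (fps_exp a) (fps_exp c) = fps_exp (a + c).
Proof.
apply: functional_extensionality => n.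
rewrite /fps_mul /fps_exp addrC exprDn mulr_suml; apply: eq_bigr => i _.
have le_in : (i <= n)%N by rewrite -ltnS.
rewrite -(bin_fact le_in) !natrM -mulr_natr.
have fact_neq0 j : (j`!%:R : R) != 0 by rewrite pnatr_eq0 -lt0n fact_gt0.
by field; rewrite !fact_neq0 pnatr_eq0 -lt0n bin_gt0 le_in.
Qed.

Lemma fps_exp0 : fps_exp (0 : R) = fps_one R.
Proof.
apply: functional_extensionality => -[|n]; rewrite /fps_exp /fps_one.
  by rewrite expr0 divr1.
by rewrite expr0n mul0r.
Qed.

Definition fps_dilate c f : fps R := fun n => c ^+ n * f n.

Lemma fps_dilate_mul c f g :
  fps_dilate c (fps_mul f g) = fps_mul (fps_dilate c f) (fps_dilate c g).
Proof.
apply: functional_extensionality => n.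
rewrite /fps_dilate /fps_mul mulr_sumr; apply: eq_bigr => i _.
have le_in : (i <= n)%N by rewrite -ltnS.
by rewrite -{1}(subnKC le_in) exprD; ring.
Qed.

Lemma fps_dilate_exp c a : fps_dilate c (fps_exp a) = fps_exp (c * a).
Proof.
by apply: functional_extensionality => n; rewrite /fps_dilate /fps_exp exprMn mulrA.
Qed.

Lemma fps_dilate_add c f g :
  fps_dilate c (fps_add f g) = fps_add (fps_dilate c f) (fps_dilate c g).
Proof. by apply: functional_extensionality => n; rewrite /fps_dilate /fps_add mulrDr. Qed.

Lemma fps_dilate_one c : fps_dilate c (fps_one R) = fps_one R.
Proof.
by apply: functional_extensionality => -[|n]; rewrite /fps_dilate /fps_one ?mulr0 ?mulr1.
Qed.

Lemma size_inv_upto f n : size (inv_upto f n) = n.+1.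
Proof. by elim: n => [|n IHn] //=; rewrite size_rcons IHn. Qed.

Lemma nth_inv_upto f n i : (i <= n)%N -> nth 0 (inv_upto f n) i = fps_inv f i.
Proof.
elim: n => [|n IHn]; first by rewrite leqn0 => /eqP ->.
rewrite leq_eqVlt => /orP[/eqP -> // | lt_in].
by rewrite /= nth_rcons size_inv_upto lt_in IHn.
Qed.

Lemma fps_invS f n :
  fps_inv f n.+1 =
  - (f 0%N)^-1 * \sum_(i < n.+1) f i.+1 * fps_inv f (n.+1 - i.+1)%N.
Proof.
rewrite {1}/fps_inv /= nth_rcons size_inv_upto ltnn eqxx big_add1 big_mkord.
by congr (_ * _); apply: eq_bigr => i _; rewrite nth_inv_upto // subSS leq_subr.
Qed.

Lemma fps_mulV f : f 0%N != 0 -> fps_mul f (fps_inv f) = fps_one R.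
Proof.
move=> f0_neq0; apply: functional_extensionality => -[|n].
  by rewrite /fps_mul big_ord1 /fps_inv /= divff.
rewrite /fps_mul big_ord_recl subn0 fps_invS /fps_one.
by rewrite mulrA mulrN divff // mulN1r addNr.
Qed.

End FpsAlgebra.

Lemma sum_alt_telescope (R : pzRingType) (u : nat -> R) m :
  \sum_(s < m) (-1) ^+ s * (u s.+1 + u s) = u 0%N - (-1) ^+ m * u m.
Proof.
elim: m => [|m IHm]; first by rewrite big_ord0 expr0 mul1r subrr.
rewrite big_ord_recr /= IHm exprS mulN1r mulNr opprK mulrDr.
by rewrite [_ + (_ * u m)]addrC addrA subrK.
Qed.

Section GenocchiMultiplication.
Variable R : numFieldType.

Definition fps_exp1_add1 : fps R := fps_add (fps_exp 1) (fps_one R).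

Lemma fps_exp1_add1_mulV : fps_mul fps_exp1_add1 (fps_inv_exp1 R) = fps_one R.
Proof.
apply: fps_mulV; rewrite /fps_exp1_add1 /fps_add /fps_exp /fps_one expr0 fact0 divr1.
by rewrite (_ : 1 + 1 = 2%:R) // pnatr_eq0.
Qed.

Definition fps_alt_exp m : fps R :=
  fun n => \sum_(s < m) fps_scale ((-1) ^+ s) (fps_exp (s%:R : R)) n.

Lemma fps_alt_exp_mul m :
  odd m -> fps_mul (fps_alt_exp m) fps_exp1_add1 = fps_dilate m%:R fps_exp1_add1.
Proof.
move=> m_odd; rewrite fps_dilate_add fps_dilate_exp mulr1 fps_dilate_one.
rewrite /fps_alt_exp fps_mul_suml; apply: functional_extensionality => n.
under eq_bigr do rewrite fps_mulZl fps_mulC fps_mulDl fps_mul1l fps_mulC fps_exp_add.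
rewrite (eq_bigr (fun s : 'I_m =>
    (-1) ^+ s * (fps_exp (s.+1%:R : R) n + fps_exp (s%:R : R) n))); last first.
  by move=> s _; rewrite /fps_scale /fps_add natr1.
rewrite (sum_alt_telescope (fun s => fps_exp (s%:R : R) n)).
by rewrite -signr_odd m_odd expr1 mulN1r opprK fps_exp0 addrC.
Qed.

Lemma fps_alt_exp_mul_dilate_inv m :
  odd m ->
  fps_mul (fps_alt_exp m) (fps_dilate m%:R (fps_inv_exp1 R)) = fps_inv_exp1 R.
Proof.
move=> m_odd; apply: (@fps_mul_inv_unique _ fps_exp1_add1); last first.
  exact: fps_exp1_add1_mulV.
rewrite -fps_mulA [fps_mul fps_exp1_add1 _]fps_mulC fps_alt_exp_mul //.
by rewrite -fps_dilate_mul fps_exp1_add1_mulV fps_dilate_one.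
Qed.

Lemma fps_inv_exp1_mul_exp_dilate m x L :
  (0 < m)%N -> odd m ->
  fps_mul (fps_inv_exp1 R) (fps_exp x) L =
  (m%:R : R) ^+ L *
    \sum_(s < m) (-1) ^+ s * fps_mul (fps_inv_exp1 R) (fps_exp ((s%:R + x) / m%:R)) L.
Proof.
move=> m_gt0 m_odd; have m_neq0 : (m%:R : R) != 0 by rewrite pnatr_eq0 -lt0n.
rewrite -[in LHS](fps_alt_exp_mul_dilate_inv m_odd) [fps_mul (fps_alt_exp m) _]fps_mulC.
rewrite fps_mulA [fps_mul _ (fps_mul _ _)]fps_mulC /fps_alt_exp !fps_mul_suml.
rewrite mulr_sumr; apply: eq_bigr => s _.
rewrite fps_mulZl fps_mulZl /fps_scale fps_exp_add mulrCA; congr (_ * _).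
have -> : fps_exp (s%:R + x) = fps_dilate m%:R (fps_exp ((s%:R + x) / m%:R)).
  by rewrite fps_dilate_exp mulrC divfK.
by rewrite -fps_dilate_mul fps_mulC.
Qed.

Lemma genocchiS l y :
  genocchi l.+1 y = l.+1`!%:R * (2 * fps_mul (fps_inv_exp1 R) (fps_exp y) l).
Proof. by rewrite /genocchi !fps_mulZl fps_mulA /fps_scale fps_mulXl. Qed.

Lemma genocchi0 y : genocchi 0 y = 0 :> R.
Proof. by rewrite /genocchi !fps_mulZl fps_mulA /fps_scale fps_mulXl !mulr0. Qed.

Lemma genocchi_mul_odd m l x :
  (0 < m)%N -> odd m ->
  genocchi l x =
  (m%:R : R) ^ (l%:Z - 1) * \sum_(s < m) (-1) ^+ s * genocchi l ((s%:R + x) / m%:R).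
Proof.
move=> m_gt0 m_odd; case: l => [|l].
  by rewrite genocchi0 big1 ?mulr0 // => s _; rewrite genocchi0 mulr0.
rewrite -addn1 PoszD addrK -exprnP addn1 genocchiS.
rewrite (fps_inv_exp1_mul_exp_dilate _ _ m_gt0 m_odd) !mulr_sumr.
by apply: eq_bigr => s _; rewrite genocchiS; ring.
Qed.

End GenocchiMultiplication.

Section PolyGenocchi.
Variables (R : numFieldType) (k : int).

Definition fps_shift (f : fps R) : fps R := fun n => f n.+1.

Lemma fps_mulX_shift (f : fps R) : f 0%N = 0 -> f = fps_mul (fps_X R) (fps_shift f).
Proof. by move=> f0; apply: functional_extensionality => -[|n]; rewrite fps_mulXl. Qed.

Lemma fps_Ei_log1p0 : fps_comp (fps_Ei R k) (fps_log1p R) 0%N = 0.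
Proof. by rewrite /fps_comp big_ord1 mul0r. Qed.

Lemma fps_Ei_log1p_shift_egf N :
  N`!%:R * fps_shift (fps_comp (fps_Ei R k) (fps_log1p R)) N =
  \sum_(1 <= j < N.+2) ((j%:R : R) ^ (k - 1))^-1 * (stirling1 R N.+1 j / N.+1%:R).
Proof.
rewrite /fps_shift /fps_comp big_ord_recl mul0r add0r big_add1 big_mkord mulr_sumr.
apply: eq_bigr => j _; rewrite /fps_Ei /stirling1 /= !factS !natrM.
have j1_neq0 : ((j.+1)%:R : R) != 0 by rewrite pnatr_eq0.
have -> : ((j.+1)%:R : R) ^ k = ((j.+1)%:R : R) ^ (k - 1) * (j.+1)%:R.
  by rewrite -[X in _ = _ * X]expr1z -exprzDr ?unitfE // subrK.
have pow_neq0 : ((j.+1)%:R : R) ^ (k - 1) != 0 by rewrite expfz_eq0 negb_and j1_neq0 orbT.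
have fact_neq0 i : (i`!%:R : R) != 0 by rewrite pnatr_eq0 -lt0n fact_gt0.
by field; rewrite add0n pow_neq0 fact_neq0 !(addrC 1) !natr1 j1_neq0 pnatr_eq0.
Qed.

Lemma poly_genocchiE n x :
  poly_genocchi k n x =
  \sum_(l < n.+1) 'C(n, l)%:R * genocchi l x *
    \sum_(1 <= j < (n - l).+2)
      ((j%:R : R) ^ (k - 1))^-1 * (stirling1 R (n - l).+1 j / (n - l).+1%:R).
Proof.
rewrite /poly_genocchi (fps_mulX_shift fps_Ei_log1p0).
set D := fps_shift _; set I := fps_inv_exp1 R.
have -> : fps_mul (fps_mul (fps_scale 2 (fps_mul (fps_X R) D)) I) (fps_exp x) =
          fps_mul (fps_mul (fps_mul (fps_scale 2 (fps_X R)) I) (fps_exp x)) D.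
  by rewrite !fps_mulZl !fps_mulA [fps_mul D _]fps_mulC !fps_mulA.
by rewrite fps_mul_egf; apply: eq_bigr => l _; rewrite fps_Ei_log1p_shift_egf.
Qed.

End PolyGenocchi.

Theorem theorem6 (R : numFieldType) (k : int) (n m : nat) (x : R)
  (hm_pos : (0 < m)%N) (hm_odd : odd m) :
  poly_genocchi k n x =
  \sum_(l < n.+1)
    'C(n, l)%:R * (m%:R : R) ^ (l%:Z - 1) *
    \sum_(1 <= j < (n - l).+2)
      \sum_(s < m)
        (-1) ^+ s * genocchi l ((s%:R + x) / m%:R)
        * ((j%:R : R) ^ (k - 1))^-1
        * (stirling1 R (n - l).+1 j / (n - l).+1%:R).
Proof.
rewrite poly_genocchiE; apply: eq_bigr => l _.
rewrite (genocchi_mul_odd _ _ hm_pos hm_odd) mulrA -mulrA mulr_sumr.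
congr (_ * _); apply: eq_bigr => j _.
by rewrite mulr_suml; apply: eq_bigr => s _; rewrite mulrA.
Qed.
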